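(* Let $n_t \geq 1$ be an integer and let $M \geq 2$ be an integer such that $\log_2 M$ is a positive integer. For an integer $n_{rf}$ with $1 \leq n_{rf} \leq n_t$, define \[ R_{\mathrm{gsim}}(n_{rf}) = \left\lfloor \log_2 \binom{n_t}{n_{rf}} \right\rfloor + n_{rf}\log_2 M, \] and let $R^{\max}_{\mathrm{gsim}} = \max_{1\leq n_{rf}\leq n_t} R_{\mathrm{gsim}}(n_{rf})$. Then $R^{\max}_{\mathrm{gsim}} > n_t \log_2 M$ if and only if $n_t \geq 2M$.
   Context: This is the achievable rate (bits per channel use) of generalized spatial index modulation: the transmitter has $n_t$ transmit antennas and $n_{rf}$ transmit RF chains, and in each channel use it activates $n_{rf}$ of the $n_t$ antennas, chosen from a fixed set of $2^{\lfloor \log_2 \binom{n_t}{n_{rf}}\rfloor}$ activation patterns. Each active antenna sends a symbol from an $M$-ary modulation alphabet (e.g. $M$-QAM). The value $n_t\log_2 M$ is the rate of spatial multiplexing, i.e. the case $n_{rf}=n_t$. *)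

From mathcomp Require Import all_boot.
Set Implicit Arguments. Unset Strict Implicit. Unset Printing Implicit Defensive.

(* Rate of GSIM with nt transmit antennas, nrf RF chains, M-ary modulation
   where log2 M = logM (an integer):
     floor(log2 C(nt, nrf)) + nrf * log2 M.
   trunc_log 2 x is the largest e with 2^e <= x, i.e. floor(log2 x) for x >= 1. *)
Definition R_gsim (nt logM nrf : nat) : nat :=
  trunc_log 2 'C(nt, nrf) + nrf * logM.

Definition R_gsim_max (nt logM : nat) : nat :=
  \max_(1 <= nrf < nt.+1) R_gsim nt logM nrf.

From mathcomp Require Import all_boot.
From mathcomp Require Import zify.

(* If n < 2M then C(n, j) <= n^j / j! < (2M)^j / j! <= 2 M^j, using 2^j <= 2 j!.
   With C(n, k) = C(n, n - k) this gives floor(log2 C(n, k)) <= (n - k) log2 M,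
   so no activation pattern beats spatial multiplexing.  If n >= 2M, taking
   n_rf = n - 1 gives floor(log2 n) >= log2 M + 1 index bits, more than the
   log2 M bits lost with the switched-off antenna. *)

Lemma ffact_leq_expn n m : n ^_ m <= n ^ m.
Proof.
elim: m n => [|m IHm] [|n] //.
rewrite ffactSS expnS leq_mul2l /=; apply: leq_trans (IHm n) _.
by case: m {IHm} => [|m] //; rewrite leq_exp2r.
Qed.

Lemma expn2_leq_double_fact j : 2 ^ j <= 2 * j`!.
Proof.
elim: j => [|[|j] IHj] //; rewrite expnS factS.
apply: leq_trans (leq_mul (leqnn 2) IHj) _.
set f := j.+1`!; nia.
Qed.

Lemma bin_lt_double_expn n m j : n < 2 * m -> 'C(n, j) < 2 * m ^ j.
Proof.
move=> lt_n_2m; case: j => [|j]; first by rewrite bin0 expn0.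
rewrite -(ltn_pmul2r (fact_gt0 j.+1)) bin_ffact.
apply: leq_ltn_trans (ffact_leq_expn _ _) _.
apply: (@leq_trans ((2 * m) ^ j.+1)); first by rewrite ltn_exp2r.
rewrite expnMn -mulnA (mulnC (m ^ _)) mulnA leq_mul2r.
by rewrite expn2_leq_double_fact orbT.
Qed.

Lemma trunc_log_leq p n e : 1 < p -> n < p ^ e.+1 -> trunc_log p n <= e.
Proof.
move=> p_gt1 lt_n_pe; case: n lt_n_pe => [|n] lt_n_pe; first by rewrite trunc_log0.
by rewrite -ltnS -(ltn_exp2l _ _ p_gt1); apply: leq_ltn_trans (trunc_logP _ _) _.
Qed.

Lemma R_gsim_leq nt logM k :
  nt < 2 * 2 ^ logM -> k <= nt -> R_gsim nt logM k <= nt * logM.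
Proof.
move=> small_nt le_k_nt.
have bin_lt : 'C(nt, k) < 2 ^ ((nt - k) * logM).+1.
  rewrite expnS (mulnC (nt - k)) expnM -(bin_sub le_k_nt).
  exact: bin_lt_double_expn.
rewrite /R_gsim -{2}(subnK le_k_nt) mulnDl leq_add2r.
exact: trunc_log_leq bin_lt.
Qed.

Lemma R_gsim_pred_gt nt logM :
  2 * 2 ^ logM <= nt -> nt * logM < R_gsim nt logM nt.-1.
Proof.
move=> large_nt.
have [nt' def_nt] : exists nt', nt = nt'.+1 by exists nt.-1; lia.
rewrite /R_gsim def_nt /= binSn mulSn ltn_add2r.
by apply: trunc_log_max => //; rewrite expnS -def_nt.
Qed.

Theorem theorem1 (nt M logM : nat) :
  1 <= nt -> 2 <= M -> M = 2 ^ logM -> 1 <= logM ->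
  (nt * logM < R_gsim_max nt logM) <-> (2 * M <= nt).
Proof.
move=> _ _ -> _; rewrite /R_gsim_max; split.
- apply: contraTT; rewrite -ltnNge -leqNgt => small_nt.
  apply/bigmax_leqP_seq => k; rewrite mem_index_iota ltnS => /andP[_ le_k_nt] _.
  exact: R_gsim_leq.
- move=> large_nt; apply: leq_trans (R_gsim_pred_gt _ _ large_nt) _.
  by apply: leq_bigmax_seq; rewrite // mem_index_iota; lia.
Qed.
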